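(* Let $(\mathcal A;\mathcal E)$ be an exact category with exact coproducts and let $\{\mathcal J_i: i\in I\}$ be a set-indexed family of special preenveloping ideals. Then $\bigcap_{i\in I}\mathcal J_i$ is a special preenveloping ideal.
   Context: An exact category $(\mathcal A;\mathcal E)$ is an additive category with a class of conflations $X\to Y\to Z$ satisfying the Quillen–Keller axioms; it has exact coproducts if set-indexed coproducts exist and coproducts of conflations are conflations. $\mathrm{Ext}(A,B)$ is the group of conflations $B\to C\to A$. Ideals are families of subgroups of Hom closed under composition with arbitrary morphisms (the family $i\mapsto\mathcal J_i$ is assumed uniformly indexed so that the intersection is a class). For $a:A_0\to A_1$, $b:B_0\to B_1$, $\mathrm{Ext}(a,b):\mathrm{Ext}(A_1,B_0)\to\mathrm{Ext}(A_0,B_1)$ is pushout along $b$ followed by pullback along $a$; ${}^\perp\mathcal J$ is the ideal of $a$ with $\mathrm{Ext}(a,j)=0$ for all $j\in\mathcal J$. A special $\mathcal J$-preenvelope of $B$ is a morphism $j:B\to C_0$ in $\mathcal J$ for which there are conflations $B\xrightarrow{j}C_0\to A_0$, $B\to C_1\to A_1$ and a morphism of conflations between them with components $(1_B,c,a)$ where $a\in{}^\perp\mathcal J$. $\mathcal J$ is special preenveloping if every object has a special $\mathcal J$-preenvelope. *)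

From HB Require Import structures.
From mathcomp Require Import all_boot all_algebra.
Set Implicit Arguments. Unset Strict Implicit. Unset Printing Implicit Defensive.
Import GRing.Theory.
Local Open Scope ring_scope.

Record Cat := {
  Ob : Type;
  Hom : Ob -> Ob -> zmodType;
  comp : forall A B C : Ob, Hom B C -> Hom A B -> Hom A C;
  idm : forall A : Ob, Hom A A;
  compA : forall A B C D (h : Hom C D) (g : Hom B C) (f : Hom A B),
      comp h (comp g f) = comp (comp h g) f;
  comp1m : forall A B (f : Hom A B), comp (idm B) f = f;
  compm1 : forall A B (f : Hom A B), comp f (idm A) = f;
  compDl : forall A B C (g g' : Hom B C) (f : Hom A B),
      comp (g + g') f = comp g f + comp g' f;
  compDr : forall A B C (g : Hom B C) (f f' : Hom A B),
      comp g (f + f') = comp g f + comp g f'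
}.

Arguments comp {c A B C}.
Arguments idm {c}.

Section Defs.
Variable C : Cat.
Local Notation Ob := (Ob C).
Local Notation Hom := (@Hom C).
Local Notation "g \o f" := (comp g f).

Definition is_zero_object (Z : Ob) :=
  (forall A (f : Hom Z A), f = 0) /\ (forall A (f : Hom A Z), f = 0).

Definition is_biproduct (A B P : Ob) (i1 : Hom A P) (i2 : Hom B P)
    (p1 : Hom P A) (p2 : Hom P B) :=
  [/\ p1 \o i1 = idm A, p2 \o i2 = idm B, p1 \o i2 = 0, p2 \o i1 = 0
    & (i1 \o p1) + (i2 \o p2) = idm P].

Definition is_additive :=
  (exists Z, is_zero_object Z) /\
  (forall A B : Ob, exists P (i1 : Hom A P) (i2 : Hom B P) p1 p2,
      is_biproduct i1 i2 p1 p2).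

Definition is_iso A B (f : Hom A B) :=
  exists g : Hom B A, g \o f = idm A /\ f \o g = idm B.

Definition is_kernel X Y Z (i : Hom X Y) (d : Hom Y Z) :=
  d \o i = 0 /\
  forall T (f : Hom T Y), d \o f = 0 ->
    exists h : Hom T X, i \o h = f /\ forall h', i \o h' = f -> h' = h.

Definition is_cokernel X Y Z (i : Hom X Y) (d : Hom Y Z) :=
  d \o i = 0 /\
  forall T (f : Hom Y T), f \o i = 0 ->
    exists h : Hom Z T, h \o d = f /\ forall h', h' \o d = f -> h' = h.

Definition kc_pair X Y Z (i : Hom X Y) (d : Hom Y Z) :=
  is_kernel i d /\ is_cokernel i d.

Definition is_pushout X Y X' P (i : Hom X Y) (f : Hom X X')
    (i' : Hom X' P) (f' : Hom Y P) :=
  f' \o i = i' \o f /\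
  forall T (u : Hom Y T) (v : Hom X' T), u \o i = v \o f ->
    exists h : Hom P T, (h \o f' = u /\ h \o i' = v) /\
      forall h', h' \o f' = u -> h' \o i' = v -> h' = h.

Definition is_pullback Y Z Z' P (d : Hom Y Z) (g : Hom Z' Z)
    (d' : Hom P Z') (g' : Hom P Y) :=
  d \o g' = g \o d' /\
  forall T (u : Hom T Y) (v : Hom T Z'), d \o u = g \o v ->
    exists h : Hom T P, (g' \o h = u /\ d' \o h = v) /\
      forall h', g' \o h' = u -> d' \o h' = v -> h' = h.

(** A class of conflations: E i d means  X --i--> Y --d--> Z  is a conflation. *)
Definition ConfClass := forall X Y Z : Ob, Hom X Y -> Hom Y Z -> Prop.

Section Exact.
Variable E : ConfClass.

Definition inflation X Y (i : Hom X Y) := exists Z (d : Hom Y Z), E i d.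
Definition deflation Y Z (d : Hom Y Z) := exists X (i : Hom X Y), E i d.

(** Quillen--Keller axioms (as in Buehler, "Exact categories", Def. 2.1). *)
Definition is_exact_structure :=
  [/\ (forall X Y Z (i : Hom X Y) (d : Hom Y Z), E i d -> kc_pair i d),
      (forall X Y Z X' Y' Z' (i : Hom X Y) (d : Hom Y Z)
              (i' : Hom X' Y') (d' : Hom Y' Z')
              (f : Hom X X') (g : Hom Y Y') (h : Hom Z Z'),
          E i d -> is_iso f -> is_iso g -> is_iso h ->
          g \o i = i' \o f -> h \o d = d' \o g -> E i' d'),
      (forall A, inflation (idm A)) /\ (forall A, deflation (idm A)),
      (forall X Y W (i : Hom X Y) (j : Hom Y W),
          inflation i -> inflation j -> inflation (j \o i)) /\
      (forall X Y W (d : Hom X Y) (e : Hom Y W),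
          deflation d -> deflation e -> deflation (e \o d))
    &
      (forall X Y X' (i : Hom X Y) (f : Hom X X'), inflation i ->
          exists P (i' : Hom X' P) (f' : Hom Y P),
            is_pushout i f i' f' /\ inflation i') /\
      (forall Y Z Z' (d : Hom Y Z) (g : Hom Z' Z), deflation d ->
          exists P (d' : Hom P Z') (g' : Hom P Y),
            is_pullback d g d' g' /\ deflation d')].

Definition is_coproduct (K : Type) (F : K -> Ob) (P : Ob)
    (iota : forall k, Hom (F k) P) :=
  forall T (f : forall k, Hom (F k) T),
    exists h : Hom P T, (forall k, h \o iota k = f k) /\
      forall h', (forall k, h' \o iota k = f k) -> h' = h.

Definition has_coproducts :=
  forall (K : Type) (F : K -> Ob), exists P (iota : forall k, Hom (F k) P),
    is_coproduct iota.

Definition coproducts_exact :=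
  forall (K : Type) (X Y Z : K -> Ob)
         (i : forall k, Hom (X k) (Y k)) (d : forall k, Hom (Y k) (Z k)),
    (forall k, E (i k) (d k)) ->
    forall PX PY PZ (iX : forall k, Hom (X k) PX) (iY : forall k, Hom (Y k) PY)
           (iZ : forall k, Hom (Z k) PZ),
      is_coproduct iX -> is_coproduct iY -> is_coproduct iZ ->
      forall (I : Hom PX PY) (D : Hom PY PZ),
        (forall k, I \o iX k = iY k \o i k) ->
        (forall k, D \o iY k = iZ k \o d k) ->
        E I D.

Definition has_exact_coproducts := has_coproducts /\ coproducts_exact.

Definition split_conf B Y A (f : Hom B Y) (g : Hom Y A) :=
  exists s : Hom A Y, g \o s = idm A.

(** Ext(a,b) sends the class of
    xi = (B0 --f--> Y --g--> A1) to the class of the conflation eta obtained by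
    pushout along b (a conflation zeta : B1 -> Y' -> A1 with a morphism of
    conflations xi -> zeta with components (b, _, 1_A1)) followed by pullback
    along a (a conflation eta : B1 -> Y'' -> A0 with a morphism of conflations
    eta -> zeta with components (1_B1, _, a)).  Ext(a,b) = 0 means every such
    eta is split. *)
Definition Ext_zero A0 A1 B0 B1 (a : Hom A0 A1) (b : Hom B0 B1) :=
  forall Y (f : Hom B0 Y) (g : Hom Y A1), E f g ->
  forall Y' (f' : Hom B1 Y') (g' : Hom Y' A1) (y : Hom Y Y'),
    E f' g' -> y \o f = f' \o b -> g' \o y = g ->
  forall Y'' (f'' : Hom B1 Y'') (g'' : Hom Y'' A0) (y' : Hom Y'' Y'),
    E f'' g'' -> y' \o f'' = f' -> g' \o y' = a \o g'' ->
    split_conf f'' g''.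

End Exact.

Definition IdealT := forall A B : Ob, Hom A B -> Prop.

Definition is_ideal (J : IdealT) :=
  [/\ (forall A B, J A B 0),
      (forall A B (f g : Hom A B), J A B f -> J A B g -> J A B (f - g)),
      (forall A B W (f : Hom A B) (h : Hom B W), J A B f -> J A W (h \o f))
    & (forall A B W (f : Hom A B) (h : Hom W A), J A B f -> J W B (f \o h))].

Definition ideal_cap (I : Type) (Js : I -> IdealT) : IdealT :=
  fun A B f => forall i, Js i A B f.

Definition perp_ideal (E : ConfClass) (J : IdealT) : IdealT :=
  fun A0 A1 a => forall B0 B1 (j : Hom B0 B1), J B0 B1 j -> Ext_zero E a j.

Definition special_preenvelope (E : ConfClass) (J : IdealT) B C0 (j : Hom B C0) :=
  J B C0 j /\
  exists A0 (p0 : Hom C0 A0) C1 A1 (i1 : Hom B C1) (p1 : Hom C1 A1)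
         (c : Hom C0 C1) (a : Hom A0 A1),
    [/\ E _ _ _ j p0, E _ _ _ i1 p1, c \o j = i1 \o idm B, a \o p0 = p1 \o c
      & perp_ideal E J a].

Definition special_preenveloping (E : ConfClass) (J : IdealT) :=
  forall B, exists C0 (j : Hom B C0), special_preenvelope E J j.

End Defs.

From mathcomp Require Import all_boot all_algebra.
From Stdlib Require Import IndefiniteDescription.
Set Implicit Arguments. Unset Strict Implicit. Unset Printing Implicit Defensive.
Import GRing.Theory.
Local Open Scope ring_scope.

(** For each [i] choose a special [J_i]-preenvelope, i.e. a morphism of
    conflations [(1, c_i, a_i)] from [B -> C0_i -> A0_i] to [B -> C1_i -> A1_i].
    Take the coproducts of both rows, which are conflations, and push them out
    along the codiagonal [coprod B -> B].  The new inflation [B -> P0] factors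
    through every [j_i], so it lies in the intersection of the ideals, and
    [coprod a_i] is orthogonal to that intersection: a conflation pulled back
    along [coprod a_i] splits as soon as its pullbacks along the coprojections
    do, and these are split because [Ext(a_i, j) = 0]. *)

Section Preadditive.
Variable C : Cat.
Local Notation Ob := (Ob C).
Local Notation Hom := (@Hom C).
Local Notation "g \o f" := (comp g f).

Lemma comp0m A B D (f : Hom A B) : (0 : Hom B D) \o f = 0.
Proof.
have h := compDl (0 : Hom B D) 0 f; rewrite addr0 in h.
by apply: (@addrI _ (0 \o f)); rewrite addr0 -h.
Qed.

Lemma compm0 A B D (f : Hom B D) : f \o (0 : Hom A B) = 0.
Proof.
have h := compDr f (0 : Hom A B) 0; rewrite addr0 in h.
by apply: (@addrI _ (f \o 0)); rewrite addr0 -h.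
Qed.

Lemma pushout_ext X Y X' P (i : Hom X Y) (f : Hom X X') (i' : Hom X' P)
    (f' : Hom Y P) T (h1 h2 : Hom P T) :
  is_pushout i f i' f' -> h1 \o f' = h2 \o f' -> h1 \o i' = h2 \o i' -> h1 = h2.
Proof.
move=> [sq U] e1 e2.
have [|h [_ Uh]] := U T (h1 \o f') (h1 \o i'); first by rewrite -!compA sq.
by rewrite (Uh h1 erefl erefl) (Uh h2 (esym e1) (esym e2)).
Qed.

Lemma pullback_ext Y Z Z' P (d : Hom Y Z) (g : Hom Z' Z) (d' : Hom P Z')
    (g' : Hom P Y) T (h1 h2 : Hom T P) :
  is_pullback d g d' g' -> g' \o h1 = g' \o h2 -> d' \o h1 = d' \o h2 -> h1 = h2.
Proof.
move=> [sq U] e1 e2.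
have [|h [_ Uh]] := U T (g' \o h1) (d' \o h1); first by rewrite !compA sq.
by rewrite (Uh h1 erefl erefl) (Uh h2 (esym e1) (esym e2)).
Qed.

Lemma coproduct_ext K (F : K -> Ob) P (iota : forall k, Hom (F k) P) T
    (h1 h2 : Hom P T) :
  is_coproduct iota -> (forall k, h1 \o iota k = h2 \o iota k) -> h1 = h2.
Proof.
move=> U e; have [h [_ Uh]] := U T (fun k => h1 \o iota k).
by rewrite (Uh h1 (fun _ => erefl)) (Uh h2 (fun k => esym (e k))).
Qed.

Lemma coproduct_section K (F : K -> Ob) P (iota : forall k, Hom (F k) P) Y
    (g : Hom Y P) :
  is_coproduct iota -> (forall k, exists s : Hom (F k) Y, g \o s = iota k) ->
  exists s : Hom P Y, g \o s = idm P.
Proof.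
move=> cop lift.
pose s k := proj1_sig (constructive_indefinite_description _ (lift k)).
have es k : g \o s k = iota k := proj2_sig (constructive_indefinite_description _ (lift k)).
have [t [et _]] := cop Y s.
by exists t; apply: (coproduct_ext cop) => k; rewrite -compA et es comp1m.
Qed.

Lemma ideal_cap_is_ideal I (Js : I -> IdealT C) :
  (forall i, is_ideal (Js i)) -> is_ideal (ideal_cap Js).
Proof.
move=> Hid; split.
- by move=> A B i; case: (Hid i).
- by move=> A B f g Jf Jg i; case: (Hid i) => _ Hsub _ _; apply: Hsub.
- by move=> A B W f h Jf i; case: (Hid i) => _ _ Hpost _; apply: Hpost.
- by move=> A B W f h Jf i; case: (Hid i) => _ _ _ Hpre; apply: Hpre.
Qed.

Lemma perp_ideal_antitone (E : ConfClass C) (J J' : IdealT C) A0 A1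
    (a : Hom A0 A1) :
  (forall B0 B1 (j : Hom B0 B1), J' B0 B1 j -> J B0 B1 j) ->
  perp_ideal E J a -> perp_ideal E J' a.
Proof. by move=> sJ Ha B0 B1 j /sJ; apply: Ha. Qed.

Section Exact.
Variable E : ConfClass C.

Lemma coproduct_conf K (X Y Z : K -> Ob) (i : forall k, Hom (X k) (Y k))
    (d : forall k, Hom (Y k) (Z k)) PX PY PZ (iX : forall k, Hom (X k) PX)
    (iY : forall k, Hom (Y k) PY) (iZ : forall k, Hom (Z k) PZ) :
  coproducts_exact E -> (forall k, E (i k) (d k)) ->
  is_coproduct iX -> is_coproduct iY -> is_coproduct iZ ->
  exists (I : Hom PX PY) (D : Hom PY PZ),
    [/\ E I D, forall k, I \o iX k = iY k \o i k & forall k, D \o iY k = iZ k \o d k].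
Proof.
move=> Hex Eid copX copY copZ.
have [I [eI _]] := copX PY (fun k => iY k \o i k).
have [D [eD _]] := copY PZ (fun k => iZ k \o d k).
by exists I, D; split => //; apply: (Hex K X Y Z i d Eid _ _ _ iX iY iZ).
Qed.

Hypothesis HE : is_exact_structure E.

Lemma conf_kc X Y Z (i : Hom X Y) (d : Hom Y Z) : E i d -> kc_pair i d.
Proof. by case: HE => H _ _ _ _; apply: H. Qed.

Lemma conf_comp0 X Y Z (i : Hom X Y) (d : Hom Y Z) : E i d -> d \o i = 0.
Proof. by case/conf_kc => [[]]. Qed.

Lemma conf_kernel X Y Z (i : Hom X Y) (d : Hom Y Z) T (f : Hom T Y) :
  E i d -> d \o f = 0 -> exists h, i \o h = f.
Proof. by move=> /conf_kc [[_ K] _] /K [h [e _]]; exists h. Qed.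

Lemma conf_cokernel X Y Z (i : Hom X Y) (d : Hom Y Z) T (f : Hom Y T) :
  E i d -> f \o i = 0 -> exists h, h \o d = f.
Proof. by move=> /conf_kc [_ [_ K]] /K [h [e _]]; exists h. Qed.

Lemma conf_monic X Y Z (i : Hom X Y) (d : Hom Y Z) T (h1 h2 : Hom T X) :
  E i d -> i \o h1 = i \o h2 -> h1 = h2.
Proof.
move=> /conf_kc [[e0 K] _] e.
have [|h [_ Uh]] := K T (i \o h1); first by rewrite compA e0 comp0m.
by rewrite (Uh h1 erefl) (Uh h2 (esym e)).
Qed.

Lemma conf_epic X Y Z (i : Hom X Y) (d : Hom Y Z) T (h1 h2 : Hom Z T) :
  E i d -> h1 \o d = h2 \o d -> h1 = h2.
Proof.
move=> /conf_kc [_ [e0 K]] e.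
have [|h [_ Uh]] := K T (h1 \o d); first by rewrite -compA e0 compm0.
by rewrite (Uh h1 erefl) (Uh h2 (esym e)).
Qed.

Lemma iso_idm A : is_iso (idm A : Hom A A).
Proof. by exists (idm A); rewrite comp1m. Qed.

(* Axiom E2op only says that the pulled-back morphism is a deflation; its
   kernel is [X] because both rows share the kernel of [d]. *)
Lemma pullback_conf X Y Z Z' (i : Hom X Y) (d : Hom Y Z) (g : Hom Z' Z) :
  E i d -> exists P (fP : Hom X P) (dP : Hom P Z') (pi : Hom P Y),
    [/\ E fP dP, pi \o fP = i & is_pullback d g dP pi].
Proof.
move=> Eid; case: HE => _ Hiso _ _ [_ HE2op].
have [P [d' [g' [pb [X0 [i0 E0]]]]]] := HE2op _ _ _ d g (ex_intro _ X (ex_intro _ i Eid)).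
have [sq U] := pb.
have [|fP [[e1 e2] _]] := U X i 0; first by rewrite (conf_comp0 Eid) compm0.
have [|psi epsi] := conf_kernel (f := g' \o i0) Eid.
  by rewrite compA sq -compA (conf_comp0 E0) compm0.
have fpsi : fP \o psi = i0.
  apply: (pullback_ext pb); first by rewrite compA e1 epsi.
  by rewrite compA e2 comp0m (conf_comp0 E0).
have [phi ephi] := conf_kernel E0 e2.
exists P, fP, d', g'; split => //.
apply: (Hiso _ _ _ _ _ _ i0 d' fP d' psi (idm _) (idm _) E0).
- exists phi; split.
    by apply: (conf_monic E0); rewrite compA ephi fpsi compm1.
  by apply: (conf_monic Eid); rewrite compA epsi -compA ephi e1 compm1.
- exact: iso_idm.
- exact: iso_idm.
- by rewrite comp1m fpsi.
- by rewrite comp1m compm1.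
Qed.

Lemma pushout_conf X Y Z X' (i : Hom X Y) (d : Hom Y Z) (f : Hom X X') :
  E i d -> exists P (i' : Hom X' P) (f' : Hom Y P) (dP : Hom P Z),
    [/\ E i' dP, dP \o f' = d & is_pushout i f i' f'].
Proof.
move=> Eid; case: HE => _ Hiso _ _ [HE2 _].
have [P [i' [f' [po [Z0 [e0 E0]]]]]] := HE2 _ _ _ i f (ex_intro _ Z (ex_intro _ d Eid)).
have [sq U] := po.
have [|dP [[e1 e2] _]] := U Z d 0; first by rewrite (conf_comp0 Eid) comp0m.
have [h eh] := conf_cokernel E0 e2.
have [|phi ephi] := conf_cokernel (f := e0 \o f') Eid.
  by rewrite -compA sq compA (conf_comp0 E0) comp0m.
have pdp : phi \o dP = e0.
  apply: (pushout_ext po); first by rewrite -compA e1 ephi.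
  by rewrite -compA e2 compm0 (conf_comp0 E0).
exists P, i', f', dP; split => //.
apply: (Hiso _ _ _ _ _ _ i' e0 i' dP (idm _) (idm _) h E0).
- exact: iso_idm.
- exact: iso_idm.
- exists phi; split.
    by apply: (conf_epic E0); rewrite -compA eh pdp comp1m.
  by apply: (conf_epic Eid); rewrite -compA ephi compA eh e1 comp1m.
- by rewrite comp1m compm1.
- by rewrite compm1.
Qed.

Lemma pullback_conf_lift X Y Z Z' P (i : Hom X Y) (d : Hom Y Z) (g : Hom Z' Z)
    (fP : Hom X P) (dP : Hom P Z') (pi : Hom P Y)
    X1 Y1 Z1 (f1 : Hom X1 Y1) (g1 : Hom Y1 Z1) (v : Hom Y1 Y) (z : Hom Z1 Z')
    (b : Hom X1 X) :
  E fP dP -> pi \o fP = i -> is_pullback d g dP pi ->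
  E f1 g1 -> d \o v = g \o (z \o g1) -> v \o f1 = i \o b ->
  exists w : Hom Y1 P, [/\ pi \o w = v, dP \o w = z \o g1 & w \o f1 = fP \o b].
Proof.
move=> EP epi pb E1 sq ev; have [_ U] := pb.
have [w [[e1 e2] _]] := U _ v _ sq.
exists w; split => //; apply: (pullback_ext pb).
  by rewrite !compA e1 epi ev.
by rewrite !compA e2 -compA (conf_comp0 E1) (conf_comp0 EP) compm0 comp0m.
Qed.

Lemma pushout_conf_lift X Y Z X' P (i : Hom X Y) (f : Hom X X') (i' : Hom X' P)
    (f' : Hom Y P) (dP : Hom P Z)
    Y1 Z1 (i1 : Hom X' Y1) (d1 : Hom Y1 Z1) (v : Hom Y Y1) (z : Hom Z Z1) :
  E i' dP -> is_pushout i f i' f' ->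
  E i1 d1 -> v \o i = i1 \o f -> d1 \o v = z \o (dP \o f') ->
  exists w : Hom P Y1, [/\ w \o f' = v, w \o i' = i1 & d1 \o w = z \o dP].
Proof.
move=> EP po E1 sq ev; have [_ U] := po.
have [w [[e1 e2] _]] := U _ v i1 sq.
exists w; split => //; apply: (pushout_ext po).
  by rewrite -!compA e1 ev.
by rewrite -!compA e2 (conf_comp0 E1) (conf_comp0 EP) compm0.
Qed.

(* Pulling the data of [Ext(a', b)] back along a square [a' u0 = u1 a] yields
   the data of [Ext(a, b)], so [Ext(a, b) = 0] lifts [u0] through [g'']. *)
Lemma Ext_zero_lift A0 A1 A0' A1' (a : Hom A0 A1) (a' : Hom A0' A1')
    (u0 : Hom A0 A0') (u1 : Hom A1 A1') B0 B1 (b : Hom B0 B1)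
    Y (f : Hom B0 Y) (g : Hom Y A1') Y' (f' : Hom B1 Y') (g' : Hom Y' A1')
    (y : Hom Y Y') Y'' (f'' : Hom B1 Y'') (g'' : Hom Y'' A0') (y' : Hom Y'' Y') :
  a' \o u0 = u1 \o a -> Ext_zero E a b ->
  E f g -> E f' g' -> y \o f = f' \o b -> g' \o y = g ->
  E f'' g'' -> y' \o f'' = f' -> g' \o y' = a' \o g'' ->
  exists s : Hom A0 Y'', g'' \o s = u0.
Proof.
move=> sq Hab Efg Ef' eyf eg Ef'' ey' eg'.
have [Yu [fu [gu [pu [Eu epu pbu]]]]] := pullback_conf u1 Efg.
have [Y'u [f'u [g'u [p'u [E'u ep'u pb'u]]]]] := pullback_conf u1 Ef'.
have [Y''u [f''u [g''u [p''u [E''u ep''u pb''u]]]]] := pullback_conf u0 Ef''.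
have [yu [_ eg'u eyfu]] : exists yu : Hom Yu Y'u,
    [/\ p'u \o yu = y \o pu, g'u \o yu = idm A1 \o gu & yu \o fu = f'u \o b].
  apply: (pullback_conf_lift E'u ep'u pb'u Eu).
    by rewrite compA eg comp1m; case: pbu.
  by rewrite -compA epu eyf.
have [y'u [_ eg''u ey'fu]] : exists y'u : Hom Y''u Y'u,
    [/\ p'u \o y'u = y' \o p''u, g'u \o y'u = a \o g''u & y'u \o f''u = f'u \o idm B1].
  apply: (pullback_conf_lift E'u ep'u pb'u E''u).
    by case: pb''u => sq'' _; rewrite compA eg' -compA sq'' !compA sq.
  by rewrite -compA ep''u ey' compm1.
rewrite comp1m in eg'u; rewrite compm1 in ey'fu.
have [s es] := Hab _ _ _ Eu _ _ _ _ E'u eyfu eg'u _ _ _ _ E''u ey'fu eg''u.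
exists (p''u \o s).
by case: pb''u => sq'' _; rewrite compA sq'' -compA es compm1.
Qed.

Lemma Ext_zero_coproduct K (A0 A1 : K -> Ob) PA0 PA1
    (io0 : forall k, Hom (A0 k) PA0) (io1 : forall k, Hom (A1 k) PA1)
    (a : forall k, Hom (A0 k) (A1 k)) (aS : Hom PA0 PA1) B0 B1 (b : Hom B0 B1) :
  is_coproduct io0 -> (forall k, aS \o io0 k = io1 k \o a k) ->
  (forall k, Ext_zero E (a k) b) -> Ext_zero E aS b.
Proof.
move=> cop0 ea Hab Y f g Efg Y' f' g' y Ef' eyf eg Y'' f'' g'' y' Ef'' ey' eg'.
apply: (coproduct_section cop0) => k.
exact: (Ext_zero_lift (ea k) (Hab k) Efg Ef' eyf eg Ef'' ey' eg').
Qed.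

Lemma perp_ideal_coproduct (J : IdealT C) K (A0 A1 : K -> Ob) PA0 PA1
    (io0 : forall k, Hom (A0 k) PA0) (io1 : forall k, Hom (A1 k) PA1)
    (a : forall k, Hom (A0 k) (A1 k)) (aS : Hom PA0 PA1) :
  is_coproduct io0 -> (forall k, aS \o io0 k = io1 k \o a k) ->
  (forall k, perp_ideal E J (a k)) -> perp_ideal E J aS.
Proof.
move=> cop0 ea Ha B0 B1 b Jb.
by apply: (Ext_zero_coproduct cop0 ea) => k; apply: Ha.
Qed.

Record preenvelope_data (B : Ob) := PreenvelopeData {
  pe_C0 : Ob; pe_A0 : Ob; pe_C1 : Ob; pe_A1 : Ob;
  pe_j : Hom B pe_C0; pe_p0 : Hom pe_C0 pe_A0;
  pe_i1 : Hom B pe_C1; pe_p1 : Hom pe_C1 pe_A1;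
  pe_c : Hom pe_C0 pe_C1; pe_a : Hom pe_A0 pe_A1 }.

Definition is_special_preenvelope_data (J : IdealT C) B (r : preenvelope_data B) :=
  J _ _ (pe_j r) /\
  [/\ E (pe_j r) (pe_p0 r), E (pe_i1 r) (pe_p1 r), pe_c r \o pe_j r = pe_i1 r,
      pe_a r \o pe_p0 r = pe_p1 r \o pe_c r & perp_ideal E J (pe_a r)].

Lemma exists_special_preenvelope_data (J : IdealT C) :
  special_preenveloping E J ->
  forall B, exists r : preenvelope_data B, is_special_preenvelope_data J r.
Proof.
move=> HJ B.
have [C0 [j [Jj [A0 [p0 [C1 [A1 [i1 [p1 [c [a [Ej Ei1 ecj eca Ha]]]]]]]]]]]] := HJ B.
exists (PreenvelopeData j p0 i1 p1 c a); split => //; split => //.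
by rewrite ecj compm1.
Qed.

Lemma special_preenveloping_cap I (Js : I -> IdealT C) :
  has_exact_coproducts E -> (forall i, is_ideal (Js i)) ->
  (forall i, special_preenveloping E (Js i)) ->
  special_preenveloping E (ideal_cap Js).
Proof.
move=> [Hco Hex] Hid Hsp B.
have [R HR] : exists R : I -> preenvelope_data B,
    forall i, is_special_preenvelope_data (Js i) (R i).
  exact: functional_choice (fun i => exists_special_preenvelope_data (Hsp i) B).
have [PB [iB copB]] := Hco I (fun _ => B).
have [PC0 [iC0 copC0]] := Hco I (fun k => pe_C0 (R k)).
have [PA0 [iA0 copA0]] := Hco I (fun k => pe_A0 (R k)).
have [PC1 [iC1 copC1]] := Hco I (fun k => pe_C1 (R k)).
have [PA1 [iA1 copA1]] := Hco I (fun k => pe_A1 (R k)).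
have Erow0 k : E (pe_j (R k)) (pe_p0 (R k)) by case: (HR k) => _ [].
have Erow1 k : E (pe_i1 (R k)) (pe_p1 (R k)) by case: (HR k) => _ [].
have [I0 [D0 [E0 eI0 eD0]]] := coproduct_conf Hex Erow0 copB copC0 copA0.
have [I1 [D1 [E1 eI1 eD1]]] := coproduct_conf Hex Erow1 copB copC1 copA1.
have [cS [ecS _]] := copC0 PC1 (fun k => iC1 k \o pe_c (R k)).
have [aS [eaS _]] := copA0 PA1 (fun k => iA1 k \o pe_a (R k)).
have [codiag [ecodiag _]] := copB B (fun _ => idm B).
have [P0 [j [f0 [q0 [Ej eq0 po0]]]]] := pushout_conf codiag E0.
have [P1 [i1 [f1 [q1 [Ei1 eq1 po1]]]]] := pushout_conf codiag E1.
have ecI : cS \o I0 = I1.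
  apply: (coproduct_ext copB) => k; have [_ [_ _ ecj _ _]] := HR k.
  by rewrite -compA eI0 compA ecS -compA ecj eI1.
have eaD : aS \o D0 = D1 \o cS.
  apply: (coproduct_ext copC0) => k; have [_ [_ _ _ eca _]] := HR k.
  by rewrite -!compA eD0 ecS !compA eaS eD1 -!compA eca.
have ev : (f1 \o cS) \o I0 = i1 \o codiag by rewrite -compA ecI; case: po1.
have ez : q1 \o (f1 \o cS) = aS \o (q0 \o f0) by rewrite compA eq1 eq0 eaD.
have [c [_ ecj eca]] := pushout_conf_lift Ej po0 Ei1 ev ez.
exists P0, j; split.
  move=> k; have [Jjk _] := HR k; case: (Hid k) => _ _ Hpost _.
  have -> : j = (f0 \o iC0 k) \o pe_j (R k).
    by rewrite -compA -eI0 compA; case: po0 => -> _; rewrite -compA ecodiag compm1.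
  exact: Hpost.
exists PA0, q0, P1, PA1, i1, q1, c, aS; split => //; first by rewrite compm1.
apply: (perp_ideal_coproduct copA0 eaS) => k; have [_ [_ _ _ _ Hak]] := HR k.
by apply: perp_ideal_antitone Hak => B0 B1 b; apply.
Qed.

End Exact.
End Preadditive.

Theorem theorem5p5 (C : Cat) (E : ConfClass C) :
  is_additive C -> is_exact_structure E -> has_exact_coproducts E ->
  forall (I : Type) (Js : I -> IdealT C),
    (forall i, is_ideal (Js i)) ->
    (forall i, special_preenveloping E (Js i)) ->
    is_ideal (ideal_cap Js) /\ special_preenveloping E (ideal_cap Js).
Proof.
move=> _ HE Hcop I Js Hid Hsp; split; first exact: ideal_cap_is_ideal.
by apply: special_preenveloping_cap.
Qed.
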